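(* Let $A,B$ be finite-dimensional systems, $\{|j\rangle\}_{j=0}^{|A|-1}$ an orthonormal basis of $A$, and $U_0,\dots,U_{|A|-1}$ unitary operators on $B$. Let $\mathcal C_U\in\mathrm{Ch}(AB,AB)$ be the controlled-unitary channel $\mathcal C_U(X)=C_UXC_U^\dagger$ with $C_U=\sum_j|j\rangle\langle j|_A\otimes U_j$. Then \[ S^\downarrow_\infty(R_AA|R_BB)_{\Phi^{\mathcal C_U}}=-\log\dim\mathrm{span}\{|U_j\rangle\!\rangle\}_j, \] where $|U\rangle\!\rangle:=\sum_i(\mathbb 1_{R_B}\otimes U)|ii\rangle_{R_BB}$ is the vectorization of $U$.
   Context: $\log$ base 2. Maximally entangled state $\Phi_{RX}:=\frac1{|X|}\sum_{i,j}|ii\rangle\langle jj|$; Choi state of a channel $\mathcal N$ from $A'B'$ to $AB$ (here $A'=A$, $B'=B$): $\Phi^{\mathcal N}_{R_AAR_BB}:=(\mathrm{id}_{R_AR_B}\otimes\mathcal N)(\Phi_{R_AA'}\otimes\Phi_{R_BB'})$, $R_A\simeq A'$, $R_B\simeq B'$. $D_\infty(\rho\|\sigma):=\log\inf\{\lambda\ge0:\rho\le\lambda\sigma\}$ and for a state $\rho_{XY}$, $S^\downarrow_\infty(X|Y)_\rho:=-D_\infty(\rho_{XY}\|\mathbb 1_X\otimes\rho_Y)$. *)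

From HB Require Import structures.
From mathcomp Require Import all_boot all_order all_algebra.
From mathcomp Require Import complex.
From mathcomp Require Import all_classical all_reals exp.
Set Implicit Arguments. Unset Strict Implicit. Unset Printing Implicit Defensive.
Import Order.TTheory GRing.Theory Num.Theory.
Local Open Scope ring_scope.

Section QDefs.
Variable R : realType.
Local Notation C := R[i].

Definition log2 (x : R) : R := ln x / ln 2.

(* Operators on a finite-dimensional system with orthonormal basis indexed by
   the finite type T, as matrices (functions T -> T -> C). *)
Definition op (T : finType) := T -> T -> C.

Definition adj (T : finType) (M : op T) : op T := fun i j => (M j i)^*.

(* positive semidefiniteness: v^dagger M v >= 0 for all v
   (in C, [0 <= z] means z is real and nonnegative) *)
Definition psd (T : finType) (M : op T) : Prop :=
  forall v : T -> C, 0 <= \sum_i \sum_j (v i)^* * M i j * v j.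

Definition loewner_le (T : finType) (rho sigma : op T) : Prop :=
  psd (fun i j => sigma i j - rho i j).

Definition Dmax (T : finType) (rho sigma : op T) : R :=
  log2 (inf [set lam : R | 0 <= lam /\
              loewner_le rho (fun i j => (lam%:C)%C * sigma i j)]%classic).

Definition ptrace1 (X Y : finType) (rho : op (X * Y)%type) : op Y :=
  fun y y' => \sum_x rho (x, y) (x, y').

Definition id_tens (X Y : finType) (s : op Y) : op (X * Y)%type :=
  fun p q => (p.1 == q.1)%:R * s p.2 q.2.

Definition Hmin_down (X Y : finType) (rho : op (X * Y)%type) : R :=
  - Dmax rho (@id_tens X Y (ptrace1 rho)).

(* maximally entangled state Phi_{RX} on 'I_n * 'I_n (R first) *)
Definition maxent (n : nat) : op ('I_n * 'I_n)%type :=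
  fun p q => (n%:R)^-1 * ((p.1 == p.2) && (q.1 == q.2))%:R.

Definition ketbra (T : finType) (p q : T) : op T :=
  fun i j => ((i == p) && (j == q))%:R.

Definition chanAB (a b : nat) := op ('I_a * 'I_b)%type -> op ('I_a * 'I_b)%type.

(* Choi state Phi^N_{R_A A R_B B} := (id_{R_A R_B} (x) N)(Phi_{R_A A'} (x) Phi_{R_B B'}).
   Written out: Phi_{R_A A'} (x) Phi_{R_B B'} =
     sum_{ra,ra',rb,rb'} (maxent a)((ra,ra),(ra',ra')) (maxent b)((rb,rb),(rb',rb'))
       |ra rb><ra' rb'|_{R_A R_B} (x) |ra rb><ra' rb'|_{A'B'},
   so the entry of the Choi state at ((ra,x),(rb,y)), ((ra',x'),(rb',y')) is
   Phi_a((ra,ra),(ra',ra')) * Phi_b((rb,rb),(rb',rb')) * N(|ra rb><ra' rb'|)((x,y),(x',y')). *)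
Definition choi (a b : nat) (N : chanAB a b) :
    op (('I_a * 'I_a) * ('I_b * 'I_b))%type :=
  fun p q =>
    @maxent a (p.1.1, p.1.1) (q.1.1, q.1.1) * @maxent b (p.2.1, p.2.1) (q.2.1, q.2.1) *
    N (ketbra (p.1.1, p.2.1) (q.1.1, q.2.1)) (p.1.2, p.2.2) (q.1.2, q.2.2).

Definition opmul (T : finType) (M N : op T) : op T :=
  fun i j => \sum_k M i k * N k j.

Definition unitary (n : nat) (U : 'M[C]_n) : Prop :=
  forall i j : 'I_n, \sum_k U i k * (U j k)^* = (i == j)%:R.

Definition ctrlU (a b : nat) (U : 'I_a -> 'M[C]_b) : op ('I_a * 'I_b)%type :=
  fun p q => (p.1 == q.1)%:R * U p.1 p.2 q.2.

Definition ctrlU_chan (a b : nat) (U : 'I_a -> 'M[C]_b) : chanAB a b :=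
  fun X => opmul (opmul (ctrlU U) X) (adj (ctrlU U)).

(* vectorization |U>> = sum_i (1 (x) U)|ii>_{R_B B}, a row vector on R_B B
   (index (i,y) <-> mxvec_index i y); its (i,y) component is U y i. *)
Definition vecU (b : nat) (U : 'M[C]_b) : 'rV[C]_(b * b) := mxvec U^T.

Definition dim_span_vecU (a b : nat) (U : 'I_a -> 'M[C]_b) : nat :=
  \rank (\matrix_(j < a) vecU (U j)).

End QDefs.

From HB Require Import structures.
From mathcomp Require Import all_boot all_order all_algebra.
From mathcomp Require Import complex.
From mathcomp Require Import all_classical all_reals exp.
From mathcomp Require Import ring sesquilinear spectral.
Set Implicit Arguments. Unset Strict Implicit. Unset Printing Implicit Defensive.
Import Order.TTheory GRing.Theory Num.Theory.
Local Open Scope ring_scope.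

(* The Choi state of C_U is pure, with vector psi((r_A, x), (r_B, y)) =
   delta(x, r_A) U_{r_A}(y, r_B).  For a pure state, rho <= lam (1 (x) rho_Y)
   reduces, after writing a test vector v as a matrix, to
   |tr A|^2 <= lam ||A||_F^2 for all A = conj(V) W^T, where the rows of W are
   the |U_j>>.  By Cauchy-Schwarz, |tr A|^2 <= rank A ||A||_F^2 <= rank W ||A||_F^2,
   with equality when A is the orthogonal projection onto the row space of W^T;
   so the least admissible lam is rank W = dim span{|U_j>>}. *)

Lemma big_pair (V : nmodType) (I J : finType) (F : I * J -> V) :
  \sum_p F p = \sum_i \sum_j F (i, j).
Proof. by rewrite pair_bigA; apply: eq_bigr => -[]. Qed.

Lemma big_mxvec_index (V : nmodType) m n (F : 'I_(m * n) -> V) :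
  \sum_k F k = \sum_i \sum_j F (mxvec_index i j).
Proof.
rewrite pair_bigA /= (reindex (uncurry (@mxvec_index m n))) /=; last exact: curry_mxvec_bij.
by apply: eq_bigr => -[].
Qed.

Section TraceRank.
Variable C : numClosedFieldType.
Local Open Scope sesquilinear_scope.

Lemma mxtrace_mul_trC m n (A B : 'M[C]_(m, n)) :
  \tr (A *m B^t*) = \sum_i \sum_j A i j * (B i j)^*.
Proof. by apply: eq_bigr => i _; rewrite mxE; apply: eq_bigr => j _; rewrite !mxE. Qed.

Lemma dotmx_mxvec m n (A B : 'M[C]_(m, n)) :
  dotmx (mxvec A) (mxvec B) = \tr (A *m B^t*).
Proof.
rewrite dotmxE mxE big_mxvec_index mxtrace_mul_trC.
by apply: eq_bigr => i _; apply: eq_bigr => j _; rewrite 2!mxE !mxvecE.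
Qed.

Lemma trmxC_mul m n p (A : 'M[C]_(m, n)) (B : 'M[C]_(n, p)) :
  (A *m B)^t* = B^t* *m A^t*.
Proof. by rewrite trmx_mul map_mxM. Qed.

Lemma mxtrace_CauchySchwarz m n (A B : 'M[C]_(m, n)) :
  `|\tr (A *m B^t*)| ^+ 2 <= \tr (A *m A^t*) * \tr (B *m B^t*).
Proof. by rewrite -!dotmx_mxvec; exact: (CauchySchwarz (@dotmx C _) _ _).1. Qed.

Lemma mxtrace_mul_unitary k n (H : 'M[C]_(n, k)) (F : 'M[C]_(k, n)) :
  F \is unitarymx ->
  `|\tr (H *m F)| ^+ 2 <= k%:R * \tr ((H *m F) *m (H *m F)^t*).
Proof.
move=> F_unitary.
have trFF : \tr (F^t* *m F) = k%:R by rewrite mxtrace_mulC (unitarymxP _) // mxtrace1.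
rewrite trmxC_mul mulmxA mulmxtVK // -trFF mulrC.
by have := mxtrace_CauchySchwarz H (F^t*); rewrite trmxCK.
Qed.

Lemma mxtrace_rank n (A : 'M[C]_n) :
  `|\tr A| ^+ 2 <= (\rank A)%:R * \tr (A *m A^t*).
Proof.
set F := schmidt (row_base A).
have F_unitary : F \is unitarymx by apply: schmidt_unitarymx; exact: rank_leq_col.
have sAF : (A <= F)%MS by rewrite (eqmx_schmidt_free (row_base_free _)) eq_row_base.
by have := mxtrace_mul_unitary (A *m pinvmx F) F_unitary; rewrite mulmxKpV.
Qed.

(* The orthogonal projection onto the row space of [M] attains [mxtrace_rank]. *)
Lemma exists_mxtrace_rank k n (M : 'M[C]_(k, n)) :
  exists2 P : 'M[C]_n, (P <= M)%MS &
    \tr P = (\rank M)%:R /\ \tr (P *m P^t*) = (\rank M)%:R.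
Proof.
set F := schmidt (row_base M).
have F_unitary : F \is unitarymx by apply: schmidt_unitarymx; exact: rank_leq_col.
have trP : \tr (F^t* *m F) = (\rank M)%:R.
  by rewrite mxtrace_mulC (unitarymxP _) // mxtrace1.
exists (F^t* *m F).
  apply: submx_trans (submxMl _ _) _.
  by rewrite (eqmx_schmidt_free (row_base_free _)) eq_row_base.
by rewrite trmxC_mul trmxCK mulmxA mulmxtVK.
Qed.
End TraceRank.

Section QuadraticForm.
Variable R : realType.
Local Notation C := R[i].

Definition qform (T : finType) (M : op R T) (v : T -> C) : C :=
  \sum_i \sum_j (v i)^* * M i j * v j.

Definition outer (T : finType) (psi : T -> C) : op R T := fun i j => psi i * (psi j)^*.

Lemma qformB (T : finType) (M N : op R T) v :
  qform (fun i j => M i j - N i j) v = qform M v - qform N v.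
Proof.
rewrite /qform -sumrB; apply: eq_bigr => i _.
by rewrite -sumrB; apply: eq_bigr => j _; rewrite mulrBr mulrBl.
Qed.

Lemma qformZ (T : finType) (c : C) (M : op R T) v :
  qform (fun i j => c * M i j) v = c * qform M v.
Proof.
rewrite /qform mulr_sumr; apply: eq_bigr => i _.
by rewrite mulr_sumr; apply: eq_bigr => j _; rewrite mulrCA !mulrA.
Qed.

Lemma qform_sum (T I : finType) (M : I -> op R T) v :
  qform (fun i j => \sum_x M x i j) v = \sum_x qform (M x) v.
Proof.
rewrite /qform [RHS]exchange_big; apply: eq_bigr => i _.
rewrite [RHS]exchange_big; apply: eq_bigr => j _.
by rewrite mulr_sumr mulr_suml.
Qed.

Lemma qform_outer (T : finType) (psi v : T -> C) :
  qform (outer psi) v = `|\sum_i (v i)^* * psi i| ^+ 2.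
Proof.
rewrite normCK rmorph_sum big_distrlr /=; apply: eq_bigr => i _.
apply: eq_bigr => j _; rewrite rmorphM /= conjCK /outer; ring.
Qed.

Lemma qform_id_tens (X Y : finType) (s : op R Y) (v : X * Y -> C) :
  qform (id_tens s) v = \sum_x qform s (fun y => v (x, y)).
Proof.
rewrite /qform big_pair; apply: eq_bigr => x _; apply: eq_bigr => y _.
rewrite big_pair (bigD1 x) //= [X in _ + X]big1 ?addr0.
  by apply: eq_bigr => y' _; rewrite /id_tens /= eqxx mul1r.
move=> x' /negbTE x'x; apply: big1 => y' _.
by rewrite /id_tens /= eq_sym x'x mul0r mulr0 mul0r.
Qed.

Lemma qform_id_tens_ptrace1_outer (X Y : finType) (c : C) (psi v : X * Y -> C) :
  qform (id_tens (ptrace1 (fun p q => c * outer psi p q))) v =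
  c * \sum_x \sum_x' `|\sum_y (v (x, y))^* * psi (x', y)| ^+ 2.
Proof.
rewrite qform_id_tens mulr_sumr; apply: eq_bigr => x _.
rewrite [LHS](qform_sum (fun x' y y' => c * outer (fun y => psi (x', y)) y y')).
by rewrite mulr_sumr; apply: eq_bigr => x' _; rewrite qformZ qform_outer.
Qed.

Lemma loewner_leP (T : finType) (rho sigma : op R T) :
  loewner_le rho sigma <-> forall v, qform rho v <= qform sigma v.
Proof.
by split=> le_rho_sigma v; have := le_rho_sigma v;
  rewrite -[X in 0 <= X]/(qform (fun i j => sigma i j - rho i j) v) qformB subr_ge0.
Qed.

Lemma loewner_le_outer_ptrace (X Y : finType) (c mu : C) (psi : X * Y -> C) :
  0 < c ->
  loewner_le (fun p q => c * outer psi p q)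
    (fun p q => mu * id_tens (ptrace1 (fun p' q' => c * outer psi p' q')) p q) <->
  forall v, `|\sum_p (v p)^* * psi p| ^+ 2 <=
            mu * \sum_x \sum_x' `|\sum_y (v (x, y))^* * psi (x', y)| ^+ 2.
Proof.
move=> c_gt0; rewrite loewner_leP.
by split=> le_v v; move: (le_v v);
  rewrite !qformZ qform_outer qform_id_tens_ptrace1_outer (mulrCA mu) ler_pM2l.
Qed.
End QuadraticForm.

Section ControlledUnitaryChoi.
Variables (R : realType) (a b : nat) (U : 'I_a -> 'M[R[i]]_b).
Local Notation C := R[i].
Local Notation X := ('I_a * 'I_a)%type.
Local Notation Y := ('I_b * 'I_b)%type.
Local Open Scope sesquilinear_scope.

Definition choi_vec (p : X * Y) : C := (p.1.2 == p.1.1)%:R * U p.1.2 p.2.2 p.2.1.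

Lemma choi_ctrlU_chan :
  choi (ctrlU_chan U) = fun p q => (a%:R)^-1 * (b%:R)^-1 * outer choi_vec p q.
Proof.
apply/funext => p; apply/funext => q.
rewrite /choi /maxent /ctrlU_chan /opmul /adj /ketbra /= !eqxx /= !mulr1.
set P := (p.1.1, p.2.1); set Q := (q.1.1, q.2.1).
have ketbraP k : \sum_m ctrlU U (p.1.2, p.2.2) m * ((m == P) && (k == Q))%:R
    = ctrlU U (p.1.2, p.2.2) P * (k == Q)%:R.
  rewrite (bigD1 P) //= eqxx /= big1 ?addr0 // => m /negbTE ->.
  by rewrite mulr0.
under eq_bigr do rewrite ketbraP.
rewrite (bigD1 Q) //= eqxx mulr1 big1 ?addr0; last first.
  by move=> k /negbTE ->; rewrite mulr0 mul0r.
by rewrite /ctrlU /choi_vec /outer /= !mulrA.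
Qed.

Definition vecU_mx : 'M[C]_(a, b * b) := \matrix_(j < a) vecU (U j).

Lemma mulmx_vecU_mxE m (Z : 'M[C]_(m, b * b)) i j :
  \sum_(y : Y) Z i (mxvec_index y.1 y.2) * U j y.2 y.1 = (Z *m vecU_mx^T) i j.
Proof.
rewrite mxE big_mxvec_index pair_bigA /=; apply: eq_bigr => -[y1 y2] _.
by rewrite /= [vecU_mx^T _ _]mxE mxE /vecU mxvecE mxE.
Qed.

Definition overlap (v : X * Y -> C) (x : X) (j : 'I_a) : C :=
  \sum_(y : Y) (v (x, y))^* * U j y.2 y.1.

Lemma inner_choi_vec v : \sum_p (v p)^* * choi_vec p = \sum_j overlap v (j, j) j.
Proof.
rewrite big_pair (@big_pair _ 'I_a 'I_a); apply: eq_bigr => j _.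
rewrite (bigD1 j) //= [X in _ + X]big1 ?addr0.
  by apply: eq_bigr => y _; rewrite /choi_vec /= eqxx mul1r.
by move=> k /negbTE kj; apply: big1 => y _; rewrite /choi_vec /= kj mul0r mulr0.
Qed.

Lemma marginal_choi_vec v :
  \sum_x \sum_x' `|\sum_y (v (x, y))^* * choi_vec (x', y)| ^+ 2 =
  \sum_x \sum_j `|overlap v x j| ^+ 2.
Proof.
apply: eq_bigr => x _; rewrite big_pair; apply: eq_bigr => j _.
rewrite (bigD1 j) //= [X in _ + X]big1 ?addr0.
  by congr (`|_| ^+ 2); apply: eq_bigr => y _; rewrite /choi_vec /= eqxx mul1r.
move=> k /negbTE kj; rewrite big1 ?normr0 ?expr0n // => y _.
by rewrite /choi_vec /= kj mul0r mulr0.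
Qed.

Definition overlap_mx (v : X * Y -> C) : 'M[C]_a := \matrix_(j, j') overlap v (j, j) j'.

Lemma overlap_mxE v :
  overlap_mx v = \matrix_j mxvec (\matrix_(y1, y2) (v ((j, j), (y1, y2)))^*) *m vecU_mx^T.
Proof.
apply/matrixP => j j'; rewrite -mulmx_vecU_mxE mxE; apply: eq_bigr => -[y1 y2] _.
by rewrite mxE mxvecE mxE.
Qed.

Lemma overlap_bound v :
  `|\sum_j overlap v (j, j) j| ^+ 2 <=
  (\rank vecU_mx)%:R * \sum_x \sum_j `|overlap v x j| ^+ 2.
Proof.
set A := overlap_mx v.
have trA : \tr A = \sum_j overlap v (j, j) j by apply: eq_bigr => j _; rewrite mxE.
have rankA : (\rank A <= \rank vecU_mx)%N.
  by rewrite /A overlap_mxE -[leqRHS]mxrank_tr mxrankM_maxr.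
have frobA : \tr (A *m A^t*) <= \sum_x \sum_j `|overlap v x j| ^+ 2.
  rewrite mxtrace_mul_trC big_pair; apply: ler_sum => j _.
  have -> : \sum_j' A j j' * (A j j')^* = \sum_j' `|overlap v (j, j) j'| ^+ 2.
    by apply: eq_bigr => j' _; rewrite mxE normCK.
  rewrite [leRHS](bigD1 j) //= lerDl.
  by do 2![apply: sumr_ge0 => ? _]; exact: exprn_ge0.
have frob_ge0 : 0 <= \tr (A *m A^t*).
  by rewrite mxtrace_mul_trC; do 2![apply: sumr_ge0 => ? _]; exact: mul_conjC_ge0.
rewrite -trA; apply: le_trans (mxtrace_rank A) _.
by apply: ler_pM => //; rewrite ler_nat.
Qed.

Lemma overlap_saturated : exists v,
  \sum_j overlap v (j, j) j = (\rank vecU_mx)%:R /\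
  \sum_x \sum_j `|overlap v x j| ^+ 2 = (\rank vecU_mx)%:R.
Proof.
have [P sPW] := exists_mxtrace_rank vecU_mx^T; rewrite mxrank_tr => -[trP frobP].
set Z := P *m pinvmx vecU_mx^T; have PZ : P = Z *m vecU_mx^T by rewrite mulmxKpV.
pose v p := (p.1.1 == p.1.2)%:R * (Z p.1.1 (mxvec_index p.2.1 p.2.2))^*.
have overlapE x j : overlap v x j = (x.1 == x.2)%:R * P x.1 j.
  rewrite PZ -mulmx_vecU_mxE mulr_sumr; apply: eq_bigr => y _.
  by rewrite rmorphM /= conjCK conjC_nat mulrA.
exists v.
split; first by rewrite -trP; apply: eq_bigr => j _; rewrite overlapE eqxx mul1r.
rewrite -frobP mxtrace_mul_trC big_pair; apply: eq_bigr => j _.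
rewrite (bigD1 j) //= [X in _ + X]big1 ?addr0.
  by apply: eq_bigr => j' _; rewrite overlapE eqxx mul1r normCK.
move=> k /negbTE jk; apply: big1 => j' _.
by rewrite overlapE /= eq_sym jk mul0r normr0 expr0n.
Qed.

Lemma Dmax_set_ctrlU_chan : (0 < a)%N -> (0 < b)%N ->
  [set lam : R | 0 <= lam /\ loewner_le (choi (ctrlU_chan U))
     (fun i j => (lam%:C)%C * id_tens (ptrace1 (choi (ctrlU_chan U))) i j)]%classic =
  `[(\rank vecU_mx)%:R, +oo[%classic.
Proof.
move=> a_gt0 b_gt0.
have c_gt0 : 0 < (a%:R)^-1 * (b%:R)^-1 :> C by rewrite mulr_gt0 // invr_gt0 ltr0n.
have ler_natC r (lam : R) : (r%:R <= lam%:C :> C)%C = (r%:R <= lam).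
  by rewrite -(rmorph_nat (real_complex R)) lecR.
rewrite choi_ctrlU_chan; apply/seteqP; split=> lam /=; rewrite in_itv /= andbT.
  case=> lam_ge0 /(loewner_le_outer_ptrace _ _ c_gt0) le_v.
  have [v [trv frobv]] := overlap_saturated.
  move: (le_v v); rewrite inner_choi_vec marginal_choi_vec trv frobv normr_nat.
  have [->|rank_gt0] := posnP (\rank vecU_mx); first by rewrite lam_ge0.
  by rewrite expr2 ler_pM2r ?ltr0n // ler_natC.
move=> rank_le_lam; split; first exact: le_trans (ler0n _ _) rank_le_lam.
apply/(loewner_le_outer_ptrace _ _ c_gt0) => v.
rewrite inner_choi_vec marginal_choi_vec; apply: le_trans (overlap_bound v) _.
rewrite ler_wpM2r ?ler_natC //.
by do 2![apply: sumr_ge0 => ? _]; exact: exprn_ge0.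
Qed.

End ControlledUnitaryChoi.

Theorem lemma4 (R : realType) (a b : nat) (ha : (0 < a)%N) (hb : (0 < b)%N)
    (U : 'I_a -> 'M[R[i]]_b) (hU : forall j, unitary (U j)) :
  Hmin_down (choi (ctrlU_chan U)) = - log2 ((dim_span_vecU U)%:R).
Proof. by rewrite /Hmin_down /Dmax Dmax_set_ctrlU_chan // inf_itv. Qed.
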